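(* Suppose the standing assumptions (1)–(5) below hold, and that both the feature and all edges incident to the $g_n$-th node of the $n$-th training graph must be unlearned: the updated dataset is $\mathcal{D}'=(\mathbf{Z}',\mathbf{y})$ with $\mathbf{z}_i'=\mathbf{z}_i$ for $i<n$ and $\mathbf{z}_n'=\Phi(\mathbf{S}_n',\mathbf{x}_n')$, where $\mathbf{x}_n'$ agrees with $\mathbf{x}_n$ except $[\mathbf{x}_n']_{g_n}=0$, and $\mathbf{S}_n'$ is obtained from $\mathbf{S}_n$ by setting the $g_n$-th row and column to zero. Then the updated model $\mathbf{w}'=\mathbf{w}^\star+\mathbf{H}_{\mathbf{w}^\star}^{-1}\Delta$ satisfies $$\|\nabla L(\mathbf{w}',\mathcal{D}')\|\leq \frac{4\gamma_2 C_1^2F^3}{\lambda^2 n},\qquad F=\sqrt{\sum_{l=0}^{L-1}B^{2l}},$$ where $B$ is the upper frame constant of the graph wavelets used in the GST.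
   Context: Setting (graph classification). There are $n$ training graphs $\mathcal{G}_1,\dots,\mathcal{G}_n$. Graph $\mathcal{G}_i$ has $g_i$ nodes, a symmetric adjacency matrix $\mathbf{S}_i\in\mathbb{R}^{g_i\times g_i}$ (the graph shift operator), a node signal $\mathbf{x}_i\in\mathbb{R}^{g_i}$ (one scalar feature per node) and a label $y_i$. Graph scattering transform (GST). Fix positive integers $J,L$ and wavelet kernel functions $h_1,\dots,h_J:\mathbb{R}\to\mathbb{R}$. For a symmetric $\mathbf{S}=\mathbf{V}\mathbf{\Lambda}\mathbf{V}^T$ with eigenvalues $\lambda_1,\dots,\lambda_g$, set $\mathbf{H}_j(\mathbf{S})=\mathbf{V}\,\mathrm{diag}(h_j(\lambda_1),\dots,h_j(\lambda_g))\mathbf{V}^T$. The wavelets form a frame: there are constants $0<A\le B$ with $A^2\|\mathbf{x}\|^2\le\sum_{j=1}^J\|\mathbf{H}_j(\mathbf{S})\mathbf{x}\|^2\le B^2\|\mathbf{x}\|^2$ for all $\mathbf{x}$ (for all shift operators considered). Let $\rho$ be the entrywise absolute value. For a path $p=(j_1,\dots,j_l)$ with $j_k\in\{1,\dots,J\}$ and $0\le l\le L-1$, define $\Phi_{()}(\mathbf{S},\mathbf{x})=\mathbf{x}$ and $\Phi_{(j_1,\dots,j_l)}(\mathbf{S},\mathbf{x})=\rho\big(\mathbf{H}_{j_l}(\mathbf{S})\Phi_{(j_1,\dots,j_{l-1})}(\mathbf{S},\mathbf{x})\big)$, and the scalar coefficient $\phi_p(\mathbf{S},\mathbf{x})=U\Phi_p(\mathbf{S},\mathbf{x})$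 with the averaging operator $U=\frac{1}{g}\mathbf{1}^T$ ($g$ the number of nodes). The embedding $\Phi(\mathbf{S},\mathbf{x})\in\mathbb{R}^d$, $d=\sum_{l=0}^{L-1}J^l$, is the concatenation of all $\phi_p(\mathbf{S},\mathbf{x})$. Set $\mathbf{z}_i=\Phi(\mathbf{S}_i,\mathbf{x}_i)$, let $\mathbf{Z}$ have rows $\mathbf{z}_i^T$, and $\mathcal{D}=(\mathbf{Z},\mathbf{y})$. Learning and update. $\ell(s,y)$ is convex and twice differentiable in $s$; $\ell'$, $\ell''$ denote derivatives in $s$, and $\nabla$, $\nabla^2$ denote gradient/Hessian in $\mathbf{w}$. For a dataset $\mathcal{D}=(\mathbf{Z},\mathbf{y})$, $L(\mathbf{w},\mathcal{D})=\sum_{i=1}^n\big(\ell(\mathbf{w}^T\mathbf{z}_i,y_i)+\frac{\lambda}{2}\|\mathbf{w}\|^2\big)$ with $\lambda>0$, and $\mathbf{w}^\star=\arg\min_{\mathbf{w}}L(\mathbf{w},\mathcal{D})$. For the updated dataset $\mathcal{D}'$, set $\mathbf{H}_{\mathbf{w}^\star}=\nabla^2L(\mathbf{w}^\star,\mathcal{D}')$ and $\Delta=\nabla L(\mathbf{w}^\star,\mathcal{D})-\nabla L(\mathbf{w}^\star,\mathcal{D}')$. Norms are $\ell_2$ for vectors and operator norm for matrices. Standing assumptions: there are constants $C_1,C_2,\gamma_1,\gamma_2$ such that for every embedding $\mathbf{z}_i$ (of $\mathcal{D}$ or $\mathcal{D}'$) and every $\mathbf{w}\in\mathbb{R}^d$: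 (1) $\|\nabla\ell(\mathbf{w}^T\mathbf{z}_i,y_i)\|\le C_1$; (2) $|\ell'(\mathbf{w}^T\mathbf{z}_i,y_i)|\le C_2$; (3) $\ell'$ is $\gamma_1$-Lipschitz; (4) $\ell''$ is $\gamma_2$-Lipschitz; (5) the signals satisfy $|[\mathbf{x}_i]_j|\le1$ for all $i$ and all $j\in\{1,\dots,g_i\}$. *)

From HB Require Import structures.
From mathcomp Require Import all_boot all_order all_algebra.
From mathcomp Require Import all_classical all_reals all_analysis.
Set Implicit Arguments. Unset Strict Implicit. Unset Printing Implicit Defensive.
Import Order.TTheory GRing.Theory Num.Theory.
Local Open Scope ring_scope.

Section GST.
Variable R : realType.

Definition norm2 m (v : 'cV[R]_m) : R := Num.sqrt (\sum_i v i 0 ^+ 2).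

Definition dotv m (w z : 'cV[R]_m) : R := (w^T *m z) 0 0.

Definition eigdecomp g (S : 'M[R]_g) (V : 'M[R]_g) (lam : 'rV[R]_g) : Prop :=
  V^T *m V = 1%:M /\ S = V *m diag_mx lam *m V^T.

(* Spectral graph filter H(S) = V diag(h(lam_1),...,h(lam_g)) V^T, computed from
   an (arbitrarily chosen) eigendecomposition of S; 0 if none exists (never the
   case for symmetric S). *)
Definition spec_filter g (h : R -> R) (S : 'M[R]_g) : 'M[R]_g :=
  match pselect (exists VL : 'M[R]_g * 'rV[R]_g, eigdecomp S VL.1 VL.2) with
  | left H => let VL := projT1 (cid H) in
              VL.1 *m diag_mx (map_mx h VL.2) *m VL.1^T
  | right _ => 0
  end.

(* Paths (j_1,...,j_l) with j_k in {1..J} (here 'I_J) and 0 <= l <= L-1. *)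
Definition gpath (J L : nat) := {l : 'I_L & l.-tuple 'I_J}.

Definition rho g (v : 'cV[R]_g) : 'cV[R]_g := map_mx (fun a => `|a|) v.

Definition Phi_path (J : nat) (h : 'I_J -> R -> R) g (S : 'M[R]_g)
    (x : 'cV[R]_g) (p : seq 'I_J) : 'cV[R]_g :=
  foldl (fun v j => rho (spec_filter (h j) S *m v)) x p.

(* phi_p = U Phi_p with U = (1/g) 1^T *)
Definition phi_path (J : nat) (h : 'I_J -> R -> R) g (S : 'M[R]_g)
    (x : 'cV[R]_g) (p : seq 'I_J) : R :=
  (g%:R)^-1 * \sum_a Phi_path h S x p a 0.

(* Dimension d = #|paths| = sum_{l<L} J^l. *)
Definition gdim (J L : nat) : nat := #|{: gpath J L}|.

Definition gst (J L : nat) (h : 'I_J -> R -> R) g (S : 'M[R]_g)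
    (x : 'cV[R]_g) : 'cV[R]_(gdim J L) :=
  \col_i phi_path h S x (tval (projT2 (enum_val i))).

Definition wavelet_frame (J : nat) (h : 'I_J -> R -> R) g (S : 'M[R]_g)
    (A B : R) : Prop :=
  forall x : 'cV[R]_g,
    A ^+ 2 * norm2 x ^+ 2 <= \sum_j norm2 (spec_filter (h j) S *m x) ^+ 2 /\
    \sum_j norm2 (spec_filter (h j) S *m x) ^+ 2 <= B ^+ 2 * norm2 x ^+ 2.

Definition Lobj (Y : Type) (ell : R -> Y -> R) (lam : R) n d
    (z : 'I_n -> 'cV[R]_d) (y : 'I_n -> Y) (w : 'cV[R]_d) : R :=
  \sum_i (ell (dotv w (z i)) (y i) + lam / 2 * norm2 w ^+ 2).

(* Its gradient in w (ell1 = d ell / ds). *)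
Definition gradL (Y : Type) (ell1 : R -> Y -> R) (lam : R) n d
    (z : 'I_n -> 'cV[R]_d) (y : 'I_n -> Y) (w : 'cV[R]_d) : 'cV[R]_d :=
  \sum_i (ell1 (dotv w (z i)) (y i) *: z i + lam *: w).

(* Its Hessian in w (ell2 = d^2 ell / ds^2). *)
Definition hessL (Y : Type) (ell2 : R -> Y -> R) (lam : R) n d
    (z : 'I_n -> 'cV[R]_d) (y : 'I_n -> Y) (w : 'cV[R]_d) : 'M[R]_d :=
  \sum_i (ell2 (dotv w (z i)) (y i) *: (z i *m (z i)^T) + lam%:M).

End GST.

(* Since w* minimizes L(., D), the gradient of L(., D') at w* is -Delta; only the summand of the
   modified graph differs, so ||Delta|| <= 2 C1, and w' is one Newton step for L(., D') from w*.
   Convexity makes ell'' >= 0, so the Hessian dominates n lambda I and the step has length at most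
   ||Delta|| / (n lambda).  A first-order Taylor expansion of ell' with gamma2-Lipschitz ell''
   bounds the new gradient by n gamma2 F^3 times the squared step length, where F bounds the norm
   of every GST embedding: by the frame inequality each scattering layer multiplies the energy by
   at most B^2, averaging over the g nodes costs a factor 1/g, and ||x||^2 <= g. *)

From HB Require Import structures.
From mathcomp Require Import all_boot all_order all_algebra.
From mathcomp Require Import all_classical all_reals all_analysis.
From mathcomp Require Import lra ring.
Import Order.TTheory GRing.Theory Num.Theory.
Local Open Scope ring_scope.

Set Implicit Arguments.
Unset Strict Implicit.
Unset Printing Implicit Defensive.

Lemma le0_of_le_scaled (R : realFieldType) (X K : R) :
  (forall t, 0 < t <= 1 -> X <= t * K) -> X <= 0.
Proof.
move=> hX; rewrite leNgt; apply/negP => X0.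
have K0 := normr_ge0 K; have KK := ler_norm K.
have XK : 0 < X + `|K| by lra.
have t0 : 0 < X / (X + `|K|) by rewrite divr_gt0.
have t1 : X / (X + `|K|) <= 1 by rewrite ler_pdivrMr // mul1r; lra.
have := hX _ (introT andP (conj t0 t1)).
rewrite mulrAC ler_pdivlMr // => h; nra.
Qed.

Lemma lipschitz_const_ge0 (R : numDomainType) (f : R -> R) (gam : R) :
  (forall s t, `|f s - f t| <= gam * `|s - t|) -> 0 <= gam.
Proof.
by move=> hf; have := hf 1 0; rewrite subr0 normr1 mulr1; apply: le_trans.
Qed.

Section RealDerivative.
Variables (R : realType) (f df : R -> R).
Hypothesis f_derive : forall s : R, is_derive s 1 f (df s).

Lemma MVT_abs a b :
  exists2 c, `|c - a| <= `|b - a| & f b - f a = df c * (b - a).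
Proof.
have f_der : forall i : interval R, {in i, forall s, derivable f s 1}.
  by move=> i s _; exact: ex_derive.
have f_cont i := derivable_within_continuous (f_der i).
have [le_ab | lt_ba] := leP a b.
  have [c /andP[ac cb] ->] := MVT_segment le_ab (fun s _ => f_derive s) (f_cont _).
  by exists c; rewrite ?ger0_norm ?subr_ge0 // lerD2r.
have [c /andP[bc ca] fE] := MVT_segment (ltW lt_ba) (fun s _ => f_derive s) (f_cont _).
exists c; first by rewrite !ler0_norm ?subr_le0 ?(ltW lt_ba) // !opprB lerD2l lerN2.
by rewrite -opprB fE -mulrN opprB.
Qed.

Lemma taylor_remainder_le (gam a b : R) :
  (forall s t, `|df s - df t| <= gam * `|s - t|) ->
  `|f b - f a - df a * (b - a)| <= gam * (b - a) ^+ 2.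
Proof.
move=> df_lip; have [c ca ->] := MVT_abs a b.
rewrite -mulrBl normrM -real_normK ?num_real // expr2 mulrA.
apply: ler_pM; rewrite ?normr_ge0 //.
apply: le_trans (df_lip c a) _.
by rewrite ler_wpM2l // (lipschitz_const_ge0 df_lip).
Qed.

End RealDerivative.

Section ConvexSecondDerivative.
Variables (R : realType) (f df ddf : R -> R) (gam1 gam2 : R).
Hypothesis f_convex : forall a b t : R, 0 <= t <= 1 ->
  f (t * a + (1 - t) * b) <= t * f a + (1 - t) * f b.
Hypothesis f_derive : forall s : R, is_derive s 1 f (df s).
Hypothesis df_derive : forall s : R, is_derive s 1 df (ddf s).
Hypothesis df_lipschitz : forall s t, `|df s - df t| <= gam1 * `|s - t|.
Hypothesis ddf_lipschitz : forall s t, `|ddf s - ddf t| <= gam2 * `|s - t|.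

Lemma convex_tangent_le a b : df a * (b - a) <= f b - f a.
Proof.
rewrite -subr_le0; apply: (@le0_of_le_scaled _ _ (gam1 * (b - a) ^+ 2)).
move=> t /andP[t0 t1].
have hconv := f_convex b a (introT andP (conj (ltW t0) t1)).
have := taylor_remainder_le f_derive a (t * b + (1 - t) * a) df_lipschitz.
have -> : t * b + (1 - t) * a - a = t * (b - a) by ring.
rewrite ler_norml => /andP[htaylor _].
rewrite -(ler_pM2l t0); nra.
Qed.

Lemma convex_derive2_ge0 a : 0 <= ddf a.
Proof.
rewrite -oppr_le0; apply: (@le0_of_le_scaled _ _ gam2) => t /andP[t0 t1].
have df_mono : 0 <= (df (a + t) - df a) * t.
  by have := convex_tangent_le a (a + t); have := convex_tangent_le (a + t) a; lra.
have := taylor_remainder_le df_derive a (a + t) ddf_lipschitz.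
rewrite [a + t - a]addrC addKr ler_norml => /andP[_ htaylor].
rewrite -(ler_pM2l t0); nra.
Qed.

End ConvexSecondDerivative.

Section EuclideanNorm.
Variables (R : realType) (d : nat).
Implicit Types u v w : 'cV[R]_d.

Lemma dotvE u v : dotv u v = \sum_i u i 0 * v i 0.
Proof. by rewrite /dotv mxE; apply: eq_bigr => i _; rewrite mxE. Qed.

Lemma dotvC u v : dotv u v = dotv v u.
Proof. by rewrite /dotv -(trmxK (u^T *m v)) trmx_mul trmxK mxE. Qed.

Lemma dotvDr u v w : dotv u (v + w) = dotv u v + dotv u w.
Proof. by rewrite /dotv mulmxDr mxE. Qed.

Lemma dotvBr u v w : dotv u (v - w) = dotv u v - dotv u w.
Proof. by rewrite /dotv mulmxBr !mxE. Qed.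

Lemma dotvZr u c v : dotv u (c *: v) = c * dotv u v.
Proof. by rewrite /dotv -scalemxAr mxE. Qed.

Lemma dotv_sumr (I : finType) u (F : I -> 'cV[R]_d) :
  dotv u (\sum_j F j) = \sum_j dotv u (F j).
Proof. by rewrite /dotv mulmx_sumr summxE. Qed.

Lemma dotvDl u v w : dotv (u + v) w = dotv u w + dotv v w.
Proof. by rewrite dotvC dotvDr !(dotvC w). Qed.

Lemma dotvBl u v w : dotv (u - v) w = dotv u w - dotv v w.
Proof. by rewrite dotvC dotvBr !(dotvC w). Qed.

Lemma dotvZl u c v : dotv (c *: u) v = c * dotv u v.
Proof. by rewrite dotvC dotvZr dotvC. Qed.

Lemma dotv0r u : dotv u 0 = 0.
Proof. by rewrite /dotv mulmx0 mxE. Qed.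

Lemma sqr_norm2 v : norm2 v ^+ 2 = dotv v v.
Proof.
rewrite /norm2 sqr_sqrtr ?sumr_ge0 // => [|i _]; last exact: sqr_ge0.
by rewrite dotvE; apply: eq_bigr => i _; rewrite expr2.
Qed.

Lemma norm2_ge0 v : 0 <= norm2 v.
Proof. exact: sqrtr_ge0. Qed.

Lemma dotvv_ge0 v : 0 <= dotv v v.
Proof. by rewrite -sqr_norm2 sqr_ge0. Qed.

Lemma dotvv_eq0 v : (dotv v v == 0) = (v == 0).
Proof.
apply/idP/eqP => [|->]; last by rewrite dotv0r.
rewrite dotvE psumr_eq0 => [/allP v0|i _]; last by rewrite -expr2 sqr_ge0.
apply/matrixP => i j; rewrite ord1 mxE.
by have := v0 i (mem_index_enum i); rewrite /= mulf_eq0 orbb => /eqP.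
Qed.

Lemma norm2_dotv v : norm2 v = Num.sqrt (dotv v v).
Proof. by rewrite -sqr_norm2 sqrtr_sqr ger0_norm ?norm2_ge0. Qed.

Lemma CauchySchwarz_dotv u v : dotv u v ^+ 2 <= dotv u u * dotv v v.
Proof.
have [v0 | v_neq0] := eqVneq v 0; first by rewrite v0 !dotv0r expr0n mulr0.
have vv0 : 0 < dotv v v by rewrite lt0r dotvv_eq0 v_neq0 dotvv_ge0.
have := dotvv_ge0 (dotv v v *: u - dotv u v *: v).
rewrite !(dotvBl, dotvBr, dotvZl, dotvZr) (dotvC v u) => h.
rewrite -subr_ge0 -(pmulr_rge0 _ vv0); nra.
Qed.

Lemma norm_dotv_le u v : `|dotv u v| <= norm2 u * norm2 v.
Proof.
rewrite -ler_sqr ?nnegrE ?mulr_ge0 ?norm2_ge0 //.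
by rewrite real_normK ?num_real // exprMn !sqr_norm2 CauchySchwarz_dotv.
Qed.

Lemma norm2Z c v : norm2 (c *: v) = `|c| * norm2 v.
Proof.
by rewrite !norm2_dotv dotvZl dotvZr mulrA -expr2 sqrtrM ?sqr_ge0 // sqrtr_sqr.
Qed.

Lemma norm2N v : norm2 (- v) = norm2 v.
Proof. by rewrite -scaleN1r norm2Z normrN1 mul1r. Qed.

Lemma norm2D u v : norm2 (u + v) <= norm2 u + norm2 v.
Proof.
rewrite -ler_sqr ?nnegrE ?addr_ge0 ?norm2_ge0 //.
rewrite sqr_norm2 dotvDl !dotvDr (dotvC v u) -!sqr_norm2.
have := ler_norm (dotv u v); have := norm_dotv_le u v; lra.
Qed.

Lemma norm2_sum (I : finType) (P : pred I) (F : I -> 'cV[R]_d) :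
  norm2 (\sum_(i | P i) F i) <= \sum_(i | P i) norm2 (F i).
Proof.
elim/big_ind2: _ => [|u1 a1 u2 a2 h1 h2|//].
- by rewrite norm2_dotv dotv0r sqrtr0.
- exact: le_trans (norm2D _ _) (lerD h1 h2).
Qed.

Lemma sqr_norm2_le_dim v : (forall i, `|v i 0| <= 1) -> norm2 v ^+ 2 <= d%:R.
Proof.
move=> v1; rewrite sqr_norm2 dotvE -[d in d%:R]card_ord -sumr_const.
apply: ler_sum => i _; rewrite -expr2 -real_normK ?num_real //.
by rewrite expr_le1 ?normr_ge0 ?v1.
Qed.

End EuclideanNorm.

Section ScatteringEnergy.
Variables (R : realType) (J : nat) (h : 'I_J -> R -> R) (g : nat) (S : 'M[R]_g).
Variables (A B : R).
Hypothesis frame : wavelet_frame h S A B.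

Lemma norm2_rho (v : 'cV[R]_g) : norm2 (rho v) = norm2 v.
Proof.
by rewrite /norm2; congr Num.sqrt; apply: eq_bigr => i _; rewrite mxE real_normK ?num_real.
Qed.

Lemma sum_sqr_norm2_Phi_path l (x : 'cV[R]_g) :
  \sum_(t : l.-tuple 'I_J) norm2 (Phi_path h S x t) ^+ 2 <= B ^+ (2 * l) * norm2 x ^+ 2.
Proof.
elim: l x => [|l IHl] x.
  rewrite (eq_bigr (fun _ => norm2 x ^+ 2)) => [|t _]; last by rewrite (tuple0 t).
  by rewrite sumr_const card_tuple expn0 muln0 expr0 mul1r.
rewrite (reindex (fun p : 'I_J * l.-tuple 'I_J => [tuple of p.1 :: p.2])) /=; last first.
  exists (fun t : l.+1.-tuple 'I_J => (thead t, [tuple of behead t])).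
    by move=> [j t] _; congr pair; apply: val_inj.
  by move=> t _; rewrite [RHS]tuple_eta.
rewrite -(pair_big predT predT (fun j (t : l.-tuple 'I_J) =>
  norm2 (Phi_path h S x (j :: t)) ^+ 2)) /=.
(* Phi_path applies the head of the path first, and rho is an isometry. *)
apply: le_trans (_ : \sum_j B ^+ (2 * l) * norm2 (spec_filter (h j) S *m x) ^+ 2 <= _).
  by apply: ler_sum => j _; rewrite -norm2_rho; exact: IHl.
rewrite -mulr_sumr mulnS exprD [B ^+ 2 * _]mulrC -mulrA; apply: ler_wpM2l.
- by rewrite exprM exprn_ge0 ?sqr_ge0.
- by case: (frame x).
Qed.

Lemma sqr_phi_path_le (x : 'cV[R]_g) p :
  phi_path h S x p ^+ 2 <= g%:R^-1 * norm2 (Phi_path h S x p) ^+ 2.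
Proof.
set v := Phi_path h S x p; set one : 'cV[R]_g := const_mx 1.
have sum_dotv : \sum_a v a 0 = dotv one v.
  by rewrite dotvE; apply: eq_bigr => a _; rewrite mxE mul1r.
have one_dotv : dotv one one = g%:R.
  by rewrite dotvE -[g in g%:R]card_ord -sumr_const; apply: eq_bigr => a _; rewrite mxE mulr1.
have inv_g : (g%:R : R)^-1 ^+ 2 * g%:R = g%:R^-1.
  have [->|g0] := eqVneq (g%:R : R) 0; first by rewrite invr0 expr0n mul0r.
  by rewrite expr2 -mulrA mulVf ?mulr1.
rewrite /phi_path -/v exprMn sum_dotv.
apply: le_trans (ler_wpM2l (sqr_ge0 _) (CauchySchwarz_dotv one v)) _.
by rewrite one_dotv -sqr_norm2 mulrA inv_g.
Qed.

Lemma sqr_norm2_gst_le L (x : 'cV[R]_g) :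
  norm2 (@gst R J L h g S x) ^+ 2 <= g%:R^-1 * (\sum_(l < L) B ^+ (2 * l)) * norm2 x ^+ 2.
Proof.
rewrite /norm2 sqr_sqrtr ?sumr_ge0 // => [|i _]; last exact: sqr_ge0.
under eq_bigr do rewrite mxE.
rewrite -(big_enum_val (fun p : gpath J L => phi_path h S x (tval (projT2 p)) ^+ 2)) /=.
rewrite -(sig_big_dep (fun _ => true) (fun _ _ => true)
  (fun (l : 'I_L) (t : l.-tuple 'I_J) => phi_path h S x t ^+ 2)) /=.
rewrite mulr_sumr mulr_suml; apply: ler_sum => l _.
apply: le_trans (_ : \sum_(t : l.-tuple 'I_J) g%:R^-1 * norm2 (Phi_path h S x t) ^+ 2 <= _).
  by apply: ler_sum => t _; exact: sqr_phi_path_le.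
by rewrite -mulr_sumr -mulrA ler_wpM2l ?invr_ge0 // sum_sqr_norm2_Phi_path.
Qed.

Lemma norm2_gst_le L (x : 'cV[R]_g) : (forall a, `|x a 0| <= 1) ->
  norm2 (@gst R J L h g S x) <= Num.sqrt (\sum_(l < L) B ^+ (2 * l)).
Proof.
move=> x1; rewrite -[norm2 _]ger0_norm ?norm2_ge0 // -sqrtr_sqr ler_wsqrtr //.
apply: le_trans (sqr_norm2_gst_le L x) _.
have F0 : 0 <= \sum_(l < L) B ^+ (2 * l).
  by apply: sumr_ge0 => l _; rewrite exprM exprn_ge0 ?sqr_ge0.
rewrite mulrAC -[X in _ <= X]mul1r ler_wpM2r //.
apply: le_trans (ler_wpM2l _ (sqr_norm2_le_dim x1)) _; first by rewrite invr_ge0.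
have [->|g0] := eqVneq (g%:R : R) 0; first by rewrite invr0 mul0r ler01.
by rewrite mulVf.
Qed.

End ScatteringEnergy.

Section Objective.
Variables (R : realType) (Y : Type) (n d : nat).
Variables (z : 'I_n -> 'cV[R]_d) (y : 'I_n -> Y) (lam : R).
Variables (ell ell1 ell2 : R -> Y -> R) (gam1 gam2 : R).
Hypothesis ell_derive : forall (yy : Y) (s : R), is_derive s 1 (fun t => ell t yy) (ell1 s yy).
Hypothesis ell1_derive : forall (yy : Y) (s : R), is_derive s 1 (fun t => ell1 t yy) (ell2 s yy).
Hypothesis ell1_lipschitz : forall i (s t : R), `|ell1 s (y i) - ell1 t (y i)| <= gam1 * `|s - t|.
Hypothesis ell2_lipschitz : forall i (s t : R), `|ell2 s (y i) - ell2 t (y i)| <= gam2 * `|s - t|.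

Lemma Lobj_shift_le w v :
  Lobj ell lam z y (w + v) - Lobj ell lam z y w <=
  dotv v (gradL ell1 lam z y w) + \sum_i (gam1 * dotv v (z i) ^+ 2 + lam / 2 * dotv v v).
Proof.
rewrite /Lobj /gradL -sumrB dotv_sumr -big_split /=; apply: ler_sum => i _.
have := taylor_remainder_le (ell_derive (y i)) (dotv w (z i)) (dotv (w + v) (z i))
  (ell1_lipschitz i).
rewrite /= ler_norml dotvDl => /andP[_ htaylor].
rewrite !sqr_norm2 dotvDl !dotvDr !dotvZr (dotvC v w); lra.
Qed.

Lemma gradL_eq0_of_minimizer w :
  (forall w', Lobj ell lam z y w <= Lobj ell lam z y w') -> gradL ell1 lam z y w = 0.
Proof.
move=> w_min; set G := gradL ell1 lam z y w.
apply/eqP; rewrite -dotvv_eq0 eq_le dotvv_ge0 andbT.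
set K := \sum_i (gam1 * dotv G (z i) ^+ 2 + lam / 2 * dotv G G).
apply: (@le0_of_le_scaled _ _ K) => t /andP[t0 _].
rewrite -(ler_pM2l t0).
have := Lobj_shift_le w (- t *: G); rewrite -/G !(dotvZl, dotvZr).
have -> : \sum_i (gam1 * dotv (- t *: G) (z i) ^+ 2 + lam / 2 * (- t * (- t * dotv G G))) =
          t ^+ 2 * K.
  by rewrite /K mulr_sumr; apply: eq_bigr => i _; rewrite dotvZl; ring.
have := w_min (w + - t *: G); lra.
Qed.

Lemma norm2_gradLB_replace_le (z' : 'I_n -> 'cV[R]_d) (k : 'I_n) w (C : R) :
  (forall i : 'I_n, i != k -> z' i = z i) ->
  norm2 (ell1 (dotv w (z k)) (y k) *: z k) <= C ->
  norm2 (ell1 (dotv w (z' k)) (y k) *: z' k) <= C ->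
  norm2 (gradL ell1 lam z y w - gradL ell1 lam z' y w) <= 2 * C.
Proof.
move=> zz' z_le z'_le; rewrite /gradL -sumrB (bigD1 k) //= big1 => [|i ik]; last first.
  by rewrite zz' ?subrr.
rewrite addr0 opprD addrACA subrr addr0 mulr2n mulrDl mul1r.
by apply: le_trans (norm2D _ _) _; rewrite norm2N lerD.
Qed.

Lemma hessL_mulmx w v : hessL ell2 lam z y w *m v =
  \sum_i ((ell2 (dotv w (z i)) (y i) * dotv (z i) v) *: z i + lam *: v).
Proof.
rewrite /hessL mulmx_suml; apply: eq_bigr => i _.
rewrite mulmxDl -scalemxAl -mulmxA [(z i)^T *m v]mx11_scalar mul_mx_scalar.
by rewrite scalerA mul_scalar_mx.
Qed.

Lemma trmx_hessL w : (hessL ell2 lam z y w)^T = hessL ell2 lam z y w.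
Proof.
rewrite /hessL linear_sum; apply: eq_bigr => i _.
by rewrite linearD /= linearZ /= trmx_mul trmxK tr_scalar_mx.
Qed.

Hypothesis ell2_ge0 : forall i s, 0 <= ell2 s (y i).

Lemma dotv_hessL_ge w v : n%:R * lam * dotv v v <= dotv v (hessL ell2 lam z y w *m v).
Proof.
rewrite hessL_mulmx dotv_sumr -mulrA mulr_natl -[n in _ *+ n]card_ord -sumr_const.
apply: ler_sum => i _; rewrite dotvDr !dotvZr (dotvC v (z i)) lerDr.
by rewrite -mulrA mulr_ge0 // -expr2 sqr_ge0.
Qed.

Hypothesis lam_gt0 : 0 < lam.
Hypothesis n_gt0 : (0 < n)%N.

Lemma hessL_unitmx w : hessL ell2 lam z y w \in unitmx.
Proof.
set H := hessL ell2 lam z y w.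
rewrite -row_free_unit -kermx_eq0; apply/rowV0P => u /sub_kermxP uH.
have Hu : H *m u^T = 0 by rewrite -[H]trmx_hessL -trmx_mul uH trmx0.
have := dotv_hessL_ge w u^T; rewrite -/H Hu dotv0r pmulr_rle0 ?mulr_gt0 ?ltr0n // => uu.
apply: trmx_inj; rewrite trmx0; apply/eqP.
by rewrite -dotvv_eq0 eq_le uu dotvv_ge0.
Qed.

Lemma norm2_invmx_hessL_le w D :
  norm2 (invmx (hessL ell2 lam z y w) *m D) <= norm2 D / (n%:R * lam).
Proof.
set v := invmx _ *m D.
have Hv : hessL ell2 lam z y w *m v = D by rewrite mulKVmx ?hessL_unitmx.
have c_gt0 : 0 < n%:R * lam by rewrite mulr_gt0 ?ltr0n.
have := le_trans (dotv_hessL_ge w v) (ler_norm _); rewrite Hv -sqr_norm2 => hv.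
have {hv} := le_trans hv (norm_dotv_le v D).
rewrite ler_pdivlMr //; set c := n%:R * lam => hv.
have [v_gt0 | v_le0] := ltrP 0 (norm2 v).
  by rewrite -(ler_pM2l v_gt0); lra.
have -> : norm2 v = 0 by apply: le_anti; rewrite v_le0 norm2_ge0.
by rewrite mul0r norm2_ge0.
Qed.

Lemma gradL_newton_step w v :
  hessL ell2 lam z y w *m v = - gradL ell1 lam z y w ->
  gradL ell1 lam z y (w + v) = \sum_i (ell1 (dotv (w + v) (z i)) (y i)
    - ell1 (dotv w (z i)) (y i) - ell2 (dotv w (z i)) (y i) * dotv (z i) v) *: z i.
Proof.
move=> Hv; have -> : gradL ell1 lam z y (w + v) =
  gradL ell1 lam z y (w + v) - (gradL ell1 lam z y w + hessL ell2 lam z y w *m v).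
  by rewrite Hv subrr subr0.
rewrite hessL_mulmx /gradL -big_split -sumrB /=; apply: eq_bigr => i _.
by apply/matrixP => a b; rewrite !mxE; ring.
Qed.

Lemma norm2_gradL_newton_step_le (F : R) w v :
  (forall i, norm2 (z i) <= F) ->
  hessL ell2 lam z y w *m v = - gradL ell1 lam z y w ->
  norm2 (gradL ell1 lam z y (w + v)) <= n%:R * gam2 * F ^+ 3 * norm2 v ^+ 2.
Proof.
move=> zF Hv; rewrite gradL_newton_step //.
apply: le_trans (norm2_sum _ _) _.
suff term_le i : norm2 ((ell1 (dotv (w + v) (z i)) (y i) - ell1 (dotv w (z i)) (y i)
    - ell2 (dotv w (z i)) (y i) * dotv (z i) v) *: z i) <= gam2 * F ^+ 3 * norm2 v ^+ 2.
  apply: le_trans (ler_sum _ (fun i _ => term_le i)) _.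
  by rewrite sumr_const card_ord -!mulrA mulr_natl.
have := taylor_remainder_le (ell1_derive (y i)) (dotv w (z i)) (dotv (w + v) (z i))
  (ell2_lipschitz i).
have -> : dotv (w + v) (z i) - dotv w (z i) = dotv (z i) v.
  by rewrite dotvDl addrC addKr dotvC.
move=> /= htaylor.
have gam2_ge0 := lipschitz_const_ge0 (ell2_lipschitz i).
have CS : dotv (z i) v ^+ 2 <= norm2 (z i) ^+ 2 * norm2 v ^+ 2.
  by rewrite !sqr_norm2 CauchySchwarz_dotv.
have z0 := norm2_ge0 (z i); have v0 := norm2_ge0 v.
have zF3 : norm2 (z i) ^+ 3 <= F ^+ 3 by rewrite lerXn2r ?nnegrE ?(le_trans z0).
rewrite norm2Z; apply: le_trans (_ : gam2 * norm2 (z i) ^+ 3 * norm2 v ^+ 2 <= _); last first.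
  by rewrite ler_wpM2r ?sqr_ge0 // ler_wpM2l.
have -> : gam2 * norm2 (z i) ^+ 3 * norm2 v ^+ 2 =
          gam2 * (norm2 (z i) ^+ 2 * norm2 v ^+ 2) * norm2 (z i) by ring.
exact: ler_pM (normr_ge0 _) z0 (le_trans htaylor (ler_wpM2l gam2_ge0 CS)) (lexx _).
Qed.

Lemma norm2_gradL_newton_le (F : R) w : (forall i, norm2 (z i) <= F) ->
  norm2 (gradL ell1 lam z y (w + invmx (hessL ell2 lam z y w) *m - gradL ell1 lam z y w))
  <= gam2 * F ^+ 3 * norm2 (gradL ell1 lam z y w) ^+ 2 / (lam ^+ 2 * n%:R).
Proof.
move=> zF; set G := gradL ell1 lam z y w; set v := invmx _ *m - G.
have Hv : hessL ell2 lam z y w *m v = - G by rewrite mulKVmx ?hessL_unitmx.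
have v_le : norm2 v <= norm2 G / (n%:R * lam).
  by have := norm2_invmx_hessL_le w (- G); rewrite norm2N.
have F_ge0 : 0 <= F := le_trans (norm2_ge0 _) (zF (Ordinal n_gt0)).
have gam2_ge0 : 0 <= gam2 := lipschitz_const_ge0 (ell2_lipschitz (Ordinal n_gt0)).
apply: le_trans (norm2_gradL_newton_step_le zF Hv) _.
have -> : gam2 * F ^+ 3 * norm2 G ^+ 2 / (lam ^+ 2 * n%:R) =
          n%:R * gam2 * F ^+ 3 * (norm2 G / (n%:R * lam)) ^+ 2.
  by field; rewrite gt_eqF // pnatr_eq0 -lt0n.
apply: ler_wpM2l; first by rewrite !mulr_ge0 ?ler0n ?exprn_ge0.
by rewrite ler_sqr ?nnegrE ?divr_ge0 ?mulr_ge0 ?norm2_ge0 ?ler0n ?(ltW lam_gt0).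
Qed.

End Objective.

Unset Implicit Arguments.
Set Strict Implicit.

Theorem theorem4p3
  (R : realType) (J L : nat) (hJ : (0 < J)%N) (hL : (0 < L)%N)
  (h : 'I_J -> R -> R) (A B : R)
  (n : nat) (g : 'I_n -> nat)
  (S : forall i : 'I_n, 'M[R]_(g i)) (x : forall i : 'I_n, 'cV[R]_(g i))
  (Y : Type) (y : 'I_n -> Y)
  (ell ell1 ell2 : R -> Y -> R) (lam C1 C2 gam1 gam2 : R)
  (k : 'I_n) (m : 'I_(g k)) (wstar : 'cV[R]_(gdim J L))
  (* the n-th graph and its g_n-th node *)
  (hk : nat_of_ord k = n.-1) (hm : nat_of_ord m = (g k).-1)
  (hlam : 0 < lam)
  (* symmetric shift operators *)
  (hsym : forall i, (S i)^T = S i)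
  (* ell convex and twice differentiable in s, with derivatives ell1, ell2 *)
  (hconv : forall (yy : Y) (a b t : R), 0 <= t <= 1 ->
     ell (t * a + (1 - t) * b) yy <= t * ell a yy + (1 - t) * ell b yy)
  (hd1 : forall (yy : Y) (s : R), is_derive s 1 (fun t => ell t yy) (ell1 s yy))
  (hd2 : forall (yy : Y) (s : R), is_derive s 1 (fun t => ell1 t yy) (ell2 s yy)) :
  let x' : 'cV[R]_(g k) := \col_a (if a == m then 0 else x k a 0) in
  let S' : 'M[R]_(g k) :=
    \matrix_(a, b) (if (a == m) || (b == m) then 0 else S k a b) in
  let z : 'I_n -> 'cV[R]_(gdim J L) := fun i => @gst R J L h _ (S i) (x i) in
  let z' : 'I_n -> 'cV[R]_(gdim J L) :=
    fun i => if i == k then @gst R J L h _ S' x' else z i in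
  (* frame property for all shift operators considered *)
  0 < A -> A <= B ->
  (forall i, wavelet_frame h (S i) A B) -> wavelet_frame h S' A B ->
  (* standing assumptions (1)-(5) *)
  (forall i (w : 'cV[R]_(gdim J L)),
     norm2 (ell1 (dotv w (z i)) (y i) *: z i) <= C1 /\
     norm2 (ell1 (dotv w (z' i)) (y i) *: z' i) <= C1) ->
  (forall i (w : 'cV[R]_(gdim J L)),
     `|ell1 (dotv w (z i)) (y i)| <= C2 /\ `|ell1 (dotv w (z' i)) (y i)| <= C2) ->
  (forall i (s t : R), `|ell1 s (y i) - ell1 t (y i)| <= gam1 * `|s - t|) ->
  (forall i (s t : R), `|ell2 s (y i) - ell2 t (y i)| <= gam2 * `|s - t|) ->
  (forall i (a : 'I_(g i)), `|x i a 0| <= 1) ->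
  (* w* = argmin_w L(w, D) *)
  (forall w, Lobj ell lam z y wstar <= Lobj ell lam z y w) ->
  let Hw := hessL ell2 lam z' y wstar in
  let Delta := gradL ell1 lam z y wstar - gradL ell1 lam z' y wstar in
  let w' := wstar + invmx Hw *m Delta in
  let F := Num.sqrt (\sum_(l < L) B ^+ (2 * l)) in
  norm2 (gradL ell1 lam z' y w') <= 4 * gam2 * C1 ^+ 2 * F ^+ 3 / (lam ^+ 2 * n%:R).
Proof.
move=> x' S' z z' _ _ frame_S frame_S' C1_bound _ ell1_lip ell2_lip x_le1 wstar_min.
cbv zeta; set F := Num.sqrt _.
have n_gt0 : (0 < n)%N by apply: leq_ltn_trans (ltn_ord k).
have ell2_ge0 i s : 0 <= ell2 s (y i).
  exact: convex_derive2_ge0 (hconv (y i)) (hd1 (y i)) (hd2 (y i)) (ell1_lip i) (ell2_lip i) s.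
have x'_le1 a : `|x' a 0| <= 1.
  by rewrite /x' mxE; case: eqP => _; rewrite ?normr0 ?ler01 ?x_le1.
have z'_le i : norm2 (z' i) <= F.
  rewrite /z'; case: eqP => _; first exact (norm2_gst_le frame_S' L x'_le1).
  exact (norm2_gst_le (frame_S i) L (x_le1 i)).
have grad0 : gradL ell1 lam z y wstar = 0 := gradL_eq0_of_minimizer hd1 ell1_lip wstar_min.
have grad'_le : norm2 (gradL ell1 lam z' y wstar) <= 2 * C1.
  have z'_eq (i : 'I_n) : i != k -> z' i = z i by rewrite /z' => /negbTE ->.
  have [C1_z C1_z'] := C1_bound k wstar.
  have := norm2_gradLB_replace_le (ell1 := ell1) (y := y) lam z'_eq C1_z C1_z'.
  by rewrite grad0 sub0r norm2N.
rewrite grad0 sub0r.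
apply: le_trans (norm2_gradL_newton_le hd2 ell2_lip ell2_ge0 hlam n_gt0 wstar z'_le) _.
rewrite ler_wpM2r ?invr_ge0 ?mulr_ge0 ?exprn_ge0 ?ler0n ?(ltW hlam) //.
rewrite [X in _ <= X](_ : _ = gam2 * F ^+ 3 * (2 * C1) ^+ 2); last by ring.
have C1_ge0 : 0 <= C1 := le_trans (norm2_ge0 _) (C1_bound k wstar).1.
have F_ge0 : 0 <= F := sqrtr_ge0 _.
have gam2_ge0 := lipschitz_const_ge0 (ell2_lip k).
by rewrite ler_wpM2l ?ler_sqr ?nnegrE ?norm2_ge0 ?mulr_ge0 ?exprn_ge0.
Qed.
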